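(* Let $k$ be sufficiently large and $m/n\ge195\cdot2^k\ln^2k/k$. Let $\mathcal M$ be any outcome of the greedy mist construction applied to $\Phi=\Phi_k(n,m)$. Then with high probability, for every $\tau\in\{0,1\}^n$ we have $|\mathcal M\cap\mathcal D_\tau(0,10)|\le k$.
   Context: $\Phi=\Phi_k(n,m)$ is a uniformly random $k$-CNF with $m$ clauses over $x_1,\dots,x_n$. $\rho=2^{-k}m/n$, $\kappa=\ln k/k$. $\mathcal U_\Phi(\sigma)$ is the number of clauses unsatisfied by $\sigma$, $T(\Phi)=\{\tau:\mathcal U_\Phi(\tau)\le n\rho/10\}$. $\mathrm{dist}$ is Hamming distance and $\mathcal D_\sigma(r_1,r_2)=\{\tau\in\{0,1\}^n:\lfloor r_1\kappa n\rfloor\le\mathrm{dist}(\sigma,\tau)\le\lfloor r_2\kappa n\rfloor\}$. Greedy mist construction: start with $\mathcal M=\emptyset$; while $T(\Phi)\setminus\bigcup_{\mu\in\mathcal M}\mathcal D_\mu(0,2)\ne\emptyset$, add an arbitrary element of this set to $\mathcal M$. *)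

From mathcomp Require Import all_boot.
From Stdlib Require Import Reals ZArith.

Set Implicit Arguments.
Unset Strict Implicit.
Unset Printing Implicit Defensive.

Definition assignment (n : nat) := {ffun 'I_n -> bool}.

(* A literal is a pair (i, b): it is the positive literal x_i if b = true and
   the negative literal ~x_i if b = false.  It is true under sigma iff sigma i = b. *)
Definition literal (n : nat) := ('I_n * bool)%type.

(* A k-CNF with m clauses over x_1..x_n: each clause is an ordered k-tuple of
   literals. Phi_k(n,m) is the uniform distribution on this finite type. *)
Definition kcnf (k n m : nat) := {ffun 'I_m -> {ffun 'I_k -> literal n}}.

Definition lit_true n (sigma : assignment n) (l : literal n) : bool :=
  sigma l.1 == l.2.

Definition unsat k n m (Phi : kcnf k n m) (sigma : assignment n) : nat :=
  #|[set j : 'I_m | [forall l : 'I_k, ~~ lit_true sigma (Phi j l)]]|.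

Definition rho (k n m : nat) : R := ((/ 2) ^ k * INR m / INR n)%R.
Definition kappa (k : nat) : R := (ln (INR k) / INR k)%R.

Definition inT k n m (Phi : kcnf k n m) (tau : assignment n) : Prop :=
  (INR (unsat Phi tau) <= INR n * rho k n m / 10)%R.

Definition dist n (sigma tau : assignment n) : nat :=
  #|[set i : 'I_n | sigma i != tau i]|.

Definition inD (k n : nat) (sigma tau : assignment n) (r1 r2 : R) : bool :=
  (Int_part (r1 * kappa k * INR n) <=? Z.of_nat (dist sigma tau))%Z &&
  (Z.of_nat (dist sigma tau) <=? Int_part (r2 * kappa k * INR n))%Z.

(* s = [mu_0; ...; mu_{t-1}] is a possible run of the greedy mist construction:
   each mu_i was, at the time it was added, an element of
   T(Phi) \ U_{j<i} D_{mu_j}(0,2), and at the end the loop condition fails,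
   i.e. T(Phi) is covered by U_{mu in s} D_mu(0,2).  The outcome is M = {mu in s}. *)
Definition greedy_mist_run k n m (Phi : kcnf k n m) (s : seq (assignment n)) : Prop :=
  (forall i, i < size s ->
     inT Phi (nth (nth [ffun=> false] s 0) s i) /\
     forall j, j < i ->
       ~~ inD k (nth (nth [ffun=> false] s 0) s j) (nth (nth [ffun=> false] s 0) s i) 0 2)
  /\
  (forall tau, inT Phi tau -> exists2 mu, mu \in s & inD k mu tau 0 2).

From Pilot Require Import Defs.
From Stdlib Require Import Reals ZArith Lia Lra.
From mathcomp Require Import all_boot.
From mathcomp Require Import zify.

Set Implicit Arguments.
Unset Strict Implicit.
Unset Printing Implicit Defensive.

(* If some run of the greedy construction puts k + 1 points of M into D_tau(0,10), these
   points lie within distance 10 kappa n of tau, are pairwise more than 2 kappa n apart (each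
   was added outside the D(0,2) of the earlier ones) and all lie in T(Phi).  We bound the
   expected number of such configurations.  By Bonferroni, the clauses falsified by at least
   one of the k + 1 points form almost a (k + 1) / 2^k fraction of all clauses, whereas
   membership in T(Phi) lets at most (k + 1) m / (10 2^k) of the m clauses of Phi be of this
   kind; a Chernoff-type weighting shows that this happens with probability at most
   exp(-(3/20) (k + 1) m / 2^k).  There are at most 2^n ((k + 1)^n / k^(n - 10 kappa n))^(k + 1)
   configurations, and the density m / n >= 195 2^k ln^2 k / k makes the first moment at most
   exp(-n). *)

(** * Counting with finite functions *)

Lemma leq_exp2rW m n e : m <= n -> m ^ e <= n ^ e.
Proof. by move=> le_mn; elim: e => // e IHe; rewrite !expnS leq_mul. Qed.

Lemma card_ffun_forall (I J : finType) (P : pred J) :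
  #|[set f : {ffun I -> J} | [forall i, P (f i)]]| = #|P| ^ #|I|.
Proof.
rewrite -card_ffun_on; apply: eq_card => f; rewrite inE.
by apply/forallP/ffun_onP => Pf i; apply: Pf.
Qed.

Lemma card_sum_indicator (T : finType) (A : {set T}) : #|A| = \sum_x (x \in A : nat).
Proof. by rewrite -sum1_card big_mkcond; apply: eq_bigr => x _; case: (x \in A). Qed.

Lemma leq_card_bigcup (I T : finType) (P : pred I) (A : I -> {set T}) :
  #|\bigcup_(i | P i) A i| <= \sum_(i | P i) #|A i|.
Proof.
apply: (big_ind2 (fun (U : {set T}) s => #|U| <= s)) => [|U1 s1 U2 s2 le1 le2|//].
  by rewrite cards0.
exact: leq_trans (leq_card_setU U1 U2) (leq_add le1 le2).
Qed.

Lemma leq_sum_bool_pairs (I : finType) (b : pred I) :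
  \sum_i (b i : nat) <= [exists i, b i] + \sum_i \sum_(j | j != i) (b i && b j : nat).
Proof.
set A := [set i | b i].
have sumA : \sum_i (b i : nat) = #|A|.
  by rewrite card_sum_indicator; apply: eq_bigr => i _; rewrite inE.
have pairsA : \sum_i \sum_(j | j != i) (b i && b j : nat) = #|A| * (#|A| - 1).
  rewrite -sum_nat_const [RHS]big_mkcond; apply: eq_bigr => i _; rewrite inE.
  case bi: (b i) => /=; last by rewrite big1.
  rewrite (cardsD1 i A) inE bi add1n subSS subn0 card_sum_indicator big_mkcond.
  by apply: eq_bigr => j _; rewrite !inE; case: (j != i).
have existsA : [exists i, b i] = (0 < #|A|).
  by apply/existsP/card_gt0P => -[i bi]; exists i; rewrite ?inE in bi *.
rewrite sumA pairsA existsA; case: #|A| => // a.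
by rewrite add1n subSS subn0 ltnS mulSn leq_addr.
Qed.

Lemma leq_sum_card_bigcup (I T : finType) (A : I -> {set T}) :
  \sum_i #|A i| <= #|\bigcup_i A i| + \sum_i \sum_(j | j != i) #|A i :&: A j|.
Proof.
under eq_bigr do rewrite card_sum_indicator.
under [X in _ <= _ + X]eq_bigr do under eq_bigr do rewrite card_sum_indicator.
rewrite exchange_big card_sum_indicator.
under [X in _ <= _ + X]eq_bigr do rewrite exchange_big.
rewrite [X in _ <= _ + X]exchange_big -big_split /=.
apply: leq_sum => x _; apply: leq_trans (leq_sum_bool_pairs (fun i => x \in A i)) _.
have -> : (x \in \bigcup_i A i) = [exists i, x \in A i].
  by apply/bigcupP/existsP => -[i]; exists i.
by under [X in _ <= _ + X]eq_bigr do under eq_bigr do rewrite inE.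
Qed.

(* Weigh each [f] by [\prod_j w (f j)] with [w] equal to 1 on [G] and 2 off [G]:
   the total weight is [(2 #|C| - #|G|) ^ M], and [f \in F] weighs at least [2 ^ (M - Z)]. *)
Lemma card_ffun_few_in (C : finType) M (G : {set C}) Z (F : {set {ffun 'I_M -> C}}) :
  (forall f, f \in F -> #|[set j | f j \in G]| <= Z) ->
  #|F| * 2 ^ M <= 2 ^ Z * (2 * #|C| - #|G|) ^ M.
Proof.
move=> fewF; pose w c := if c \in G then 1 else 2.
have sum_w : \sum_c w c = 2 * #|C| - #|G|.
  have sumC : \sum_c w c + #|G| = 2 * #|C|.
    rewrite card_sum_indicator -big_split /= mul2n -addnn -{1 2}sum1_card.
    by rewrite -big_split; apply: eq_bigr => c _; rewrite /w; case: (c \in G).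
  by rewrite -sumC addnK.
have total : \sum_(f : {ffun 'I_M -> C}) \prod_j w (f j) = (2 * #|C| - #|G|) ^ M.
  by rewrite -(bigA_distr_bigA (fun _ => w)) sum_w prod_nat_const card_ord.
have weight (f : {ffun 'I_M -> C}) : 2 ^ M = 2 ^ #|[set j | f j \in G]| * \prod_j w (f j).
  have -> : \prod_j w (f j) = \prod_(j in [set j | f j \notin G]) 2.
    by rewrite [RHS]big_mkcond; apply: eq_bigr => j _; rewrite /w inE; case: (f j \in G).
  rewrite prod_nat_const -expnD; congr (2 ^ _).
  rewrite -[LHS](card_ord M) -(cardsC [set j | f j \in G]); congr (_ + _).
  by apply: eq_card => j; rewrite !inE.
rewrite -total -sum_nat_const big_distrr /=.
apply: (@leq_trans (\sum_(f in F) 2 ^ Z * \prod_j w (f j))).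
  by apply: leq_sum => f Ff; rewrite (weight f) leq_mul2r leq_pexp2l ?fewF ?orbT.
by rewrite [X in _ <= X](bigID (mem F)) leq_addr.
Qed.

Lemma card_agree n (s t : assignment n) :
  #|[set v | s v == t v]| = n - Defs.dist s t.
Proof.
have := cardsC [set v | s v == t v]; rewrite card_ord.
have -> : Defs.dist s t = #|~: [set v | s v == t v]|.
  by apply: eq_card => v; rewrite !inE.
lia.
Qed.

(* Weigh [s] by [q] per coordinate where it agrees with [tau]: the total weight is
   [(q + 1) ^ n] and each [s] in the ball weighs at least [q ^ (n - r)]. *)
Lemma card_hamming_ball n r q (tau : assignment n) : 0 < q ->
  #|[set s : assignment n | Defs.dist tau s <= r]| * q ^ (n - r) <= q.+1 ^ n.
Proof.
move=> q_gt0; pose w (v : 'I_n) (b : bool) := if b == tau v then q else 1.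
have total : \sum_(s : assignment n) \prod_v w v (s v) = q.+1 ^ n.
  rewrite -bigA_distr_bigA (eq_bigr (fun _ => q.+1)) ?prod_nat_const ?card_ord //.
  by move=> v _; rewrite big_bool /w; case: (tau v); rewrite /= ?addn1 ?add1n.
have weight (s : assignment n) : \prod_v w v (s v) = q ^ (n - Defs.dist tau s).
  rewrite -card_agree -prod_nat_const [RHS]big_mkcond.
  by apply: eq_bigr => v _; rewrite /w inE eq_sym.
rewrite -total -sum_nat_const.
apply: (@leq_trans (\sum_(s in [set s | Defs.dist tau s <= r]) \prod_v w v (s v))).
  apply: leq_sum => s; rewrite inE weight => near_s; rewrite leq_pexp2l //.
  by rewrite leq_sub2l.
by rewrite [X in _ <= X](bigID (mem [set s | Defs.dist tau s <= r])) leq_addr.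
Qed.

(** * Clauses falsified by far-apart assignments *)

Lemma dist_sym n (s t : assignment n) : Defs.dist s t = Defs.dist t s.
Proof. by apply: eq_card => v; rewrite !inE eq_sym. Qed.

Local Notation clause k n := {ffun 'I_k -> literal n}.

Definition falsified_clauses k n (s : assignment n) : {set clause k n} :=
  [set c : clause k n | [forall l, ~~ lit_true s (c l)]].

Lemma unsat_falsified k n m (Phi : kcnf k n m) s :
  unsat Phi s = #|[set j | Phi j \in falsified_clauses k s]|.
Proof. by apply: eq_card => j; rewrite !inE. Qed.

Lemma card_falsified_clausesI k n (s t : assignment n) :
  #|falsified_clauses k s :&: falsified_clauses k t| = (n - Defs.dist s t) ^ k.
Proof.
pose both := [pred l : literal n | ~~ lit_true s l && ~~ lit_true t l].
have card_both : #|both| = n - Defs.dist s t.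
  rewrite -card_agree -!sum1_card [RHS]big_mkcond.
  transitivity (\sum_v \sum_(b : bool) (both (v, b) : nat)).
    by rewrite pair_bigA big_mkcond; apply: eq_bigr => -[v b] _.
  by apply: eq_bigr => v _; rewrite big_bool inE /both /lit_true /=; case: (s v); case: (t v).
rewrite -card_both -[k in _ ^ k]card_ord -(@card_ffun_forall 'I_k _ both).
apply: eq_card => c.
rewrite !inE; apply/andP/forallP => [[/forallP fs /forallP ft] l | fst].
  by rewrite inE fs ft.
by split; apply/forallP => l; have /andP[] := fst l.
Qed.

Lemma card_falsified_clauses k n (s : assignment n) : #|falsified_clauses k s| = n ^ k.
Proof.
rewrite -[falsified_clauses k s]setIid card_falsified_clausesI.
by rewrite (_ : Defs.dist s s = 0) ?subn0 //; apply: eq_card0 => v; rewrite !inE eqxx.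
Qed.

Lemma card_falsified_bigcup k n K d (mu : 'I_K -> assignment n) :
  (forall i j, i != j -> d < Defs.dist (mu i) (mu j)) ->
  K * n ^ k <= #|\bigcup_i falsified_clauses k (mu i)| + K * (K - 1) * (n - d.+1) ^ k.
Proof.
move=> far; have := leq_sum_card_bigcup (fun i => falsified_clauses k (mu i)).
under eq_bigr do rewrite card_falsified_clauses.
rewrite sum_nat_const card_ord => /leq_trans; apply; rewrite leq_add2l.
rewrite -mulnA -[K in K * _]card_ord -sum_nat_const; apply: leq_sum => i _.
apply: (@leq_trans (\sum_(j | j != i) (n - d.+1) ^ k)).
  apply: leq_sum => j ji; rewrite card_falsified_clausesI.
  by apply/leq_exp2rW/leq_sub2l; rewrite far // eq_sym.
by rewrite (eq_bigl (mem (predC1 i))) // sum_nat_const cardC1 card_ord subn1.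
Qed.

Definition low_unsat k n M (Phi : kcnf k n M) (s : assignment n) : bool :=
  10 * 2 ^ k * unsat Phi s <= M.

Definition low_unsat_formulas k n M K (mu : {ffun 'I_K -> assignment n}) : {set kcnf k n M} :=
  [set Phi | [forall i, low_unsat Phi (mu i)]].

(* [k] times the total weight [2 #|clause k n| - #|G|] used in [card_ffun_few_in], where [G]
   collects the clauses falsified by one of [K] pairwise far assignments. *)
Definition slot_weight k n K := 2 * k * (2 * n) ^ k - K * (k - 1) * n ^ k.

Lemma card_low_unsat_formulas k n M K d (mu : {ffun 'I_K -> assignment n}) :
  (K - 1) * k * (n - d.+1) ^ k <= n ^ k ->
  (forall i j, i != j -> d < Defs.dist (mu i) (mu j)) ->
  #|low_unsat_formulas k M mu| * (2 ^ M * k ^ M) <=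
  2 ^ (K * M %/ (10 * 2 ^ k)) * slot_weight k n K ^ M.
Proof.
move=> overlap far; set G := \bigcup_i falsified_clauses k (mu i).
have G_large : K * (k - 1) * n ^ k <= k * #|G|.
  have := card_falsified_bigcup k far; rewrite -/G; nia.
have weight : (2 * #|clause k n| - #|G|) * k <= slot_weight k n K.
  have G_small : #|G| <= #|clause k n| by apply: max_card.
  move: G_small; rewrite /slot_weight card_ffun card_prod card_bool !card_ord [n * 2]mulnC.
  nia.
have few_in Phi : Phi \in low_unsat_formulas k M mu ->
    #|[set j | Phi j \in G]| <= K * M %/ (10 * 2 ^ k).
  rewrite inE => /forallP low; rewrite leq_divRL ?muln_gt0 ?expn_gt0 //.
  have -> : [set j | Phi j \in G] = \bigcup_i [set j | Phi j \in falsified_clauses k (mu i)].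
    apply/setP => j; rewrite inE.
    by apply/bigcupP/bigcupP => -[i _ Fi]; exists i; rewrite ?inE in Fi *.
  apply: leq_trans (leq_mul (leq_card_bigcup _ _) (leqnn _)) _.
  rewrite big_distrl -[K in K * M]card_ord -sum_nat_const; apply: leq_sum => i _.
  by rewrite -unsat_falsified; apply: leq_trans (eq_leq (mulnC _ _)) (low i).
rewrite mulnA; apply: leq_trans (leq_mul (card_ffun_few_in few_in) (leqnn _)) _.
by rewrite -mulnA -expnMn leq_mul2l leq_exp2rW ?orbT.
Qed.

Definition spread_config n K r d (tau : assignment n) (mu : {ffun 'I_K -> assignment n}) :=
  [forall i, Defs.dist tau (mu i) <= r] &&
  [forall i, forall j, (i != j) ==> (d < Defs.dist (mu i) (mu j))].

Definition bad_formulas k n M K r d : {set kcnf k n M} :=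
  \bigcup_(p : assignment n * {ffun 'I_K -> assignment n} | spread_config r d p.1 p.2)
    low_unsat_formulas k M p.2.

Lemma card_spread_configs n K r d q : 0 < q ->
  #|[set p : assignment n * {ffun 'I_K -> assignment n} | spread_config r d p.1 p.2]| *
    q ^ ((n - r) * K) <= 2 ^ n * q.+1 ^ (n * K).
Proof.
move=> q_gt0; pose ball tau := [pred s : assignment n | Defs.dist tau s <= r].
have card_configs :
    #|[set p : assignment n * {ffun 'I_K -> assignment n} | spread_config r d p.1 p.2]| <=
    \sum_(tau : assignment n)
      #|[set mu : {ffun 'I_K -> assignment n} | [forall i, ball tau (mu i)]]|.
  apply: (@leq_trans (\sum_(tau : assignment n) \sum_(mu : {ffun 'I_K -> assignment n})
      (spread_config r d tau mu : nat))).
    by rewrite card_sum_indicator pair_bigA; apply/eq_leq/eq_bigr => -[tau mu] _; rewrite inE.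
  apply: leq_sum => tau _; rewrite card_sum_indicator; apply: leq_sum => mu _; rewrite inE.
  by case/boolP: (spread_config r d tau mu) => [/andP[-> _] | _].
have card_ball_tuples tau :
    #|[set mu : {ffun 'I_K -> assignment n} | [forall i, ball tau (mu i)]]| * q ^ ((n - r) * K)
      <= q.+1 ^ (n * K).
  rewrite card_ffun_forall card_ord !expnM -expnMn; apply: leq_exp2rW.
  rewrite (eq_card (B := [set s | Defs.dist tau s <= r])) ?card_hamming_ball // => s.
  by rewrite inE.
apply: leq_trans (leq_mul card_configs (leqnn _)) _.
rewrite big_distrl /= -[n in 2 ^ n]card_ord -card_bool -card_ffun -sum_nat_const.
by apply: leq_sum => tau _; apply: card_ball_tuples.
Qed.

Lemma card_bad_formulas k n M K r d : 0 < k ->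
  (K - 1) * k * (n - d.+1) ^ k <= n ^ k ->
  #|bad_formulas k n M K r d| * (2 ^ M * k ^ M) * k ^ ((n - r) * K) <=
  2 ^ (K * M %/ (10 * 2 ^ k)) * slot_weight k n K ^ M * (2 ^ n * k.+1 ^ (n * K)).
Proof.
move=> k_gt0 overlap; set E := 2 ^ (K * M %/ _) * _.
have union_bound : #|bad_formulas k n M K r d| * (2 ^ M * k ^ M) <=
    #|[set p : assignment n * {ffun 'I_K -> assignment n} | spread_config r d p.1 p.2]| * E.
  apply: leq_trans (leq_mul (leq_card_bigcup _ _) (leqnn _)) _.
  rewrite big_distrl -sum_nat_cond_const; apply: leq_sum => -[tau mu] /andP[_ /forallP far].
  apply: (card_low_unsat_formulas M overlap) => /= i j ij.
  by have /forallP/(_ j) := far i; rewrite ij.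
apply: leq_trans (leq_mul union_bound (leqnn _)) _.
by rewrite mulnAC [X in X <= _]mulnC leq_mul2l card_spread_configs ?orbT.
Qed.

(** * Runs of the greedy mist construction *)

Section GreedyMist.

Variables (k n M r d : nat) (Phi : kcnf k n M) (s : seq (assignment n)).
Hypothesis run : greedy_mist_run Phi s.

Lemma greedy_mist_inT x : x \in s -> inT Phi x.
Proof.
move=> sx; have [/(_ (index x s))] := run; rewrite index_mem => /(_ sx)[+ _] _.
by rewrite nth_index.
Qed.

Hypothesis far_outside_D2 : forall a b : assignment n, ~~ inD k a b 0 2 -> d < Defs.dist a b.

Lemma greedy_mist_far x y : x \in s -> y \in s -> x != y -> d < Defs.dist x y.
Proof.
wlog lt_xy : x y / index x s < index y s.
  move=> wlog_far sx sy xy; case: (ltngtP (index x s) (index y s)) => [||eq_xy].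
  - by move/wlog_far; apply.
  - by rewrite dist_sym eq_sym in xy *; move/wlog_far; apply.
  - by move: xy; rewrite -(nth_index x sx) eq_xy nth_index ?eqxx.
move=> sx sy _; have [/(_ (index y s))] := run; rewrite index_mem => /(_ sy)[_ /(_ _ lt_xy)] + _.
by rewrite !nth_index //; apply: far_outside_D2.
Qed.

Hypothesis T_low_unsat : forall mu, inT Phi mu -> low_unsat Phi mu.
Hypothesis close_in_D10 : forall a b : assignment n, inD k a b 0 10 -> Defs.dist a b <= r.

Lemma greedy_mist_crowded_bad tau :
  k < #|[set mu | (mu \in s) && inD k tau mu 0 10]| -> Phi \in bad_formulas k n M k.+1 r d.
Proof.
set S := [set mu | _] => crowded.
pose mu := [ffun i : 'I_k.+1 => enum_val (widen_ord crowded i)].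
have muS i : (mu i \in s) && inD k tau (mu i) 0 10.
  by have := enum_valP (widen_ord crowded i); rewrite inE ffunE.
apply/bigcupP; exists (tau, mu) => /=; last first.
  by rewrite inE; apply/forallP => i; case/andP: (muS i) => /greedy_mist_inT /T_low_unsat.
apply/andP; split; apply/forallP => i; first by case/andP: (muS i) => _ /close_in_D10.
apply/forallP => j; apply/implyP => ij.
apply: greedy_mist_far; [by case/andP: (muS i) | by case/andP: (muS j) |].
apply: contra ij; rewrite !ffunE => /eqP/enum_val_inj/(congr1 val) /= eq_ij.
exact/eqP/val_inj.
Qed.

End GreedyMist.

(** * Numerical estimates *)

Local Open Scope R_scope.

Lemma INR_expn a b : INR (a ^ b)%N = INR a ^ b.
Proof. by elim: b => [|b IHb] //; rewrite expnS -multE mult_INR IHb. Qed.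

Lemma INR_muln a b : INR (a * b)%N = INR a * INR b.
Proof. by rewrite -multE mult_INR. Qed.

Lemma INR_leq a b : (a <= b)%N -> INR a <= INR b.
Proof. by move/leP; apply: le_INR. Qed.

Lemma exp_le_exp x y : x <= y -> exp x <= exp y.
Proof. by case=> [/exp_increasing/Rlt_le | ->]; last apply: Rle_refl. Qed.

Lemma exp_pow x n : exp x ^ n = exp (INR n * x).
Proof.
elim: n => [|n IHn]; first by rewrite /= Rmult_0_l exp_0.
by rewrite -tech_pow_Rmult IHn S_INR -exp_plus; congr exp; ring.
Qed.

Lemma pow_le_exp x n : 0 <= x -> (1 + x) ^ n <= exp (INR n * x).
Proof.
move=> x_ge0; rewrite -exp_pow; apply: pow_incr; split; first lra.
exact: exp_ineq1_le.
Qed.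

Lemma pow2_le_exp n : 2 ^ n <= exp (INR n).
Proof. by have := pow_le_exp n Rle_0_1; rewrite Rmult_1_r (_ : 1 + 1 = 2) //; lra. Qed.

Lemma INR_2 : INR 2 = 2.   Proof. by []. Qed.
Lemma INR_10 : INR 10 = 10. Proof. by rewrite /=; ring. Qed.

Definition nfloor (x : R) : nat := Z.to_nat (Int_part x).

Lemma INR_nfloor x : 0 <= x -> INR (nfloor x) = IZR (Int_part x).
Proof.
move=> x_ge0; rewrite INR_IZR_INZ Z2Nat.id //; have [_ gt] := base_Int_part x.
by apply: Zlt_succ_le; apply: lt_IZR; rewrite succ_IZR; lra.
Qed.

Lemma nfloor_le x : 0 <= x -> INR (nfloor x) <= x.
Proof. by move=> x_ge0; rewrite INR_nfloor //; have [] := base_Int_part x. Qed.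

Lemma nfloor_gt x : 0 <= x -> x < INR (nfloor x) + 1.
Proof. by move=> x_ge0; rewrite INR_nfloor //; have [] := base_Int_part x; lra. Qed.

Lemma Int_part_nfloor x : 0 <= x -> Int_part x = Z.of_nat (nfloor x).
Proof. by move=> x_ge0; apply: eq_IZR; rewrite -INR_IZR_INZ INR_nfloor. Qed.

Section HammingBands.

Variables (k n : nat) (c : R).
Hypothesis c_kappa_ge0 : 0 <= c * kappa k * INR n.

Lemma inD0_le (a b : assignment n) :
  inD k a b 0 c -> (Defs.dist a b <= nfloor (c * kappa k * INR n))%N.
Proof. by case/andP => _ /Z.leb_le; rewrite Int_part_nfloor //; lia. Qed.

Lemma notinD0_gt (a b : assignment n) :
  ~~ inD k a b 0 c -> (nfloor (c * kappa k * INR n) < Defs.dist a b)%N.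
Proof.
rewrite /inD (Int_part_nfloor c_kappa_ge0) negb_and => /orP[/negP[]|/negP far].
  apply/Z.leb_le; suff : (Int_part (0 * kappa k * INR n) <= 0)%Z by lia.
  by apply: le_IZR; have [] := base_Int_part (0 * kappa k * INR n); lra.
by apply/ltP; lia.
Qed.

End HammingBands.

Lemma ln_large k : (400 <= k)%N -> 1 <= ln (INR k) /\ 10 * ln (INR k) <= INR k.
Proof.
move=> /INR_leq; rewrite (INR_IZR_INZ 400) /= => k_large; split.
  rewrite -(ln_exp 1); apply: Rlt_le; apply: ln_increasing; first exact: exp_pos.
  by have := exp_le_3; lra.
have half := exp_ineq1_le (INR k / 20).
have k_lt : INR k < exp (INR k / 10).
  have -> : INR k / 10 = INR k / 20 + INR k / 20 by field.
  rewrite exp_plus; nra.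
have k_pos : 0 < INR k by lra.
by have := ln_increasing _ _ k_pos k_lt; rewrite ln_exp; lra.
Qed.

Lemma kappa_large k : (400 <= k)%N -> 0 <= kappa k /\ 10 * kappa k <= 1.
Proof.
move=> k_large; have [ln_ge1 ln_small] := ln_large k_large.
have k_pos : 0 < INR k by apply/lt_0_INR/ltP; apply: leq_trans k_large.
rewrite /kappa; split; first by apply: Rmult_le_pos; [lra | apply/Rlt_le/Rinv_0_lt_compat].
have -> : 10 * (ln (INR k) / INR k) = 10 * ln (INR k) * / INR k by rewrite /Rdiv; ring.
rewrite -(Rinv_r (INR k)); last lra.
by apply: Rmult_le_compat_r => //; apply/Rlt_le/Rinv_0_lt_compat.
Qed.

(* [(n - 2 kappa n)^k <= n^k exp (-2 kappa k) = n^k / k^2]. *)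
Lemma small_overlap k n : (400 <= k)%N ->
  (k * k * (n - (nfloor (2 * kappa k * INR n)).+1) ^ k <= n ^ k)%N.
Proof.
move=> k_large; have [ln_ge1 _] := ln_large k_large.
have [kappa_ge0 kappa_small] := kappa_large k_large.
have k_pos : 0 < INR k by apply/lt_0_INR/ltP; apply: leq_trans k_large.
set d := nfloor _; have n_ge0 := pos_INR n.
have d_gt := nfloor_gt (x := 2 * kappa k * INR n) ltac:(nra); rewrite -/d in d_gt.
have far_le : INR (n - d.+1) <= INR n * exp (- 2 * kappa k).
  apply: Rle_trans (_ : INR n * (1 - 2 * kappa k) <= _); last first.
    by apply: Rmult_le_compat_l => //; have := exp_ineq1_le (- 2 * kappa k); lra.
  case: (leqP d.+1 n) => [le_dn | /ltnW]; last by rewrite -subn_eq0 => /eqP ->; rewrite INR_0; nra.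
  by rewrite minus_INR; [rewrite S_INR; nra | apply/leP].
have exp_k : exp (- 2 * kappa k) ^ k * (INR k * INR k) = 1.
  rewrite exp_pow (_ : INR k * (-2 * kappa k) = - (ln (INR k) + ln (INR k))).
    by rewrite exp_Ropp exp_plus exp_ln //; field; lra.
  by rewrite /kappa; field; lra.
apply/leP/INR_le; rewrite !INR_muln !INR_expn.
apply: Rle_trans (_ : INR k * INR k * (INR n * exp (- 2 * kappa k)) ^ k <= _).
  by apply: Rmult_le_compat_l; [nra | apply: pow_incr; split; [apply: pos_INR |]].
by rewrite Rpow_mult_distr -[X in _ <= X]Rmult_1_r -exp_k; right; ring.
Qed.

Lemma inT_low_unsat k n M (Phi : kcnf k n M) s : (0 < n)%N -> inT Phi s -> low_unsat Phi s.
Proof.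
move=> /ltP/lt_0_INR n_pos; rewrite /inT /low_unsat /rho => unsat_le.
have two_k_pos : 0 < 2 ^ k by apply: pow_lt; lra.
apply/leP/INR_le; rewrite !INR_muln INR_expn INR_10 INR_2.
have -> : INR M = INR n * ((/ 2) ^ k * INR M / INR n) / 10 * (10 * 2 ^ k).
  by rewrite pow_inv; field; lra.
by rewrite Rmult_comm; apply: Rmult_le_compat_r => //; lra.
Qed.

Lemma slot_weight_le k n : (2 <= k)%N ->
  INR (slot_weight k n k.+1) <= 2 * INR k * (2 ^ k * INR n ^ k) * (1 - INR k.+1 / 2 ^ (k + 2)).
Proof.
move=> k_ge2n; have := INR_leq k_ge2n; rewrite INR_2 => k_ge2.
have two_k_pos : 0 < 2 ^ k by apply: pow_lt; lra.
have nk_ge0 : 0 <= INR n ^ k by apply/pow_le/pos_INR.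
have -> : 2 * INR k * (2 ^ k * INR n ^ k) * (1 - INR k.+1 / 2 ^ (k + 2)) =
    2 * INR k * 2 ^ k * INR n ^ k - INR k * (INR k + 1) * INR n ^ k / 2.
  by rewrite pow_add S_INR /=; field; lra.
rewrite /slot_weight.
case: (leqP (k.+1 * (k - 1) * n ^ k) (2 * k * (2 * n) ^ k)) => [le_sub | /ltnW]; last first.
  rewrite -subn_eq0 => /eqP ->; rewrite INR_0.
  have : INR k + 1 <= 4 * 2 ^ k.
    have := INR_leq (ltn_expl k (isT : (1 < 2)%N)).
    by rewrite INR_expn S_INR (_ : INR 2 = 2) //; lra.
  move=> k_small; have : INR k * (INR k + 1) / 2 <= 2 * INR k * 2 ^ k by nra.
  by move/(Rmult_le_compat_r _ _ _ nk_ge0); lra.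
rewrite minus_INR; last exact/leP.
rewrite !INR_muln minus_INR; last by apply/leP; lia.
rewrite !INR_expn INR_muln (_ : INR 2 = 2) // S_INR Rpow_mult_distr INR_1.
have : INR k * (INR k + 1) / 2 <= (INR k + 1) * (INR k - 1) by nra.
by move/(Rmult_le_compat_r _ _ _ nk_ge0); lra.
Qed.

Lemma formula_factor_le k n M Z E : (Z * (10 * 2 ^ k) <= k.+1 * M)%N ->
  INR E <= 2 * INR k * (2 ^ k * INR n ^ k) * (1 - INR k.+1 / 2 ^ (k + 2)) ->
  INR (2 ^ Z * E ^ M) <=
  (2 * INR k) ^ M * (2 ^ k * INR n ^ k) ^ M * exp (- (3 / 20) * (INR k.+1 * INR M / 2 ^ k)).
Proof.
move=> /INR_leq; rewrite !INR_muln INR_expn INR_10 INR_2 => Z_le E_le.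
have two_k_pos : 0 < 2 ^ k by apply: pow_lt; lra.
set A := INR k.+1 * INR M / 2 ^ k.
have two_Z : 2 ^ Z <= exp (A / 10).
  apply: Rle_trans (pow2_le_exp Z) _; apply: exp_le_exp.
  apply: (Rmult_le_reg_r (10 * 2 ^ k)); first lra.
  by rewrite (_ : A / 10 * (10 * 2 ^ k) = INR k.+1 * INR M); [lra | rewrite /A; field; lra].
have E_M : INR E ^ M <= (2 * INR k * (2 ^ k * INR n ^ k)) ^ M * exp (- (A / 4)).
  set X := 2 * INR k * _.
  have a_le := exp_ineq1_le (- (INR k.+1 / 2 ^ (k + 2))).
  apply: Rle_trans (_ : (X * exp (- (INR k.+1 / 2 ^ (k + 2)))) ^ M <= _).
    apply: pow_incr; split; first exact: pos_INR.
    apply: Rle_trans E_le _; apply: Rmult_le_compat_l; last lra.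
    by apply: Rmult_le_pos; [apply: Rmult_le_pos; [lra | apply: pos_INR] |
      apply: Rmult_le_pos; [lra | apply/pow_le/pos_INR]].
  rewrite Rpow_mult_distr exp_pow; right; congr (_ * exp _).
  by rewrite /A pow_add /=; field; lra.
rewrite !INR_expn INR_2.
apply: Rle_trans (Rmult_le_compat _ _ _ _ _ _ two_Z E_M) _.
- by apply/pow_le; lra.
- by apply/pow_le/pos_INR.
rewrite -!Rpow_mult_distr; right.
rewrite (Rmult_comm (exp _)) Rmult_assoc -exp_plus; congr (_ * exp _); field.
Qed.

Lemma config_factor_le k n r : (0 < k)%N -> (r <= n)%N ->
  INR (2 ^ n * k.+1 ^ (n * k.+1)) <=
  INR (k ^ ((n - r) * k.+1)) * exp (INR n + INR k.+1 * (INR n / INR k + INR r * ln (INR k))).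
Proof.
move=> /ltP/lt_0_INR k_pos r_le.
have k_succ : INR k.+1 ^ n <= INR k ^ (n - r) * exp (INR n / INR k + INR r * ln (INR k)).
  have -> : INR k.+1 = INR k * (1 + / INR k) by rewrite S_INR; field; lra.
  rewrite Rpow_mult_distr.
  have -> : INR k ^ n = INR k ^ (n - r) * exp (INR r * ln (INR k)).
    by rewrite -exp_pow exp_ln // -pow_add plusE subnK.
  have small : (1 + / INR k) ^ n <= exp (INR n / INR k).
    by apply: pow_le_exp; apply/Rlt_le/Rinv_0_lt_compat.
  have pos : 0 <= INR k ^ (n - r) * exp (INR r * ln (INR k)).
    by apply: Rmult_le_pos; [apply: pow_le; lra | apply/Rlt_le/exp_pos].
  by rewrite exp_plus; have := Rmult_le_compat_l _ _ _ pos small; lra.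
set Y := INR n / INR k + _.
rewrite INR_muln !INR_expn INR_2 !pow_mult exp_plus -(exp_pow Y).
apply: Rle_trans (_ : exp (INR n) * (INR k ^ (n - r) * exp Y) ^ k.+1 <= _); last first.
  by rewrite Rpow_mult_distr; right; ring.
apply: Rmult_le_compat.
- by apply: pow_le; lra.
- by do 2 apply: pow_le; apply: pos_INR.
- exact: pow2_le_exp.
by apply: pow_incr; split; [apply/pow_le/pos_INR | apply: k_succ].
Qed.

Lemma exponent_le k n M r : (400 <= k)%N -> 0 < INR n ->
  195 * 2 ^ k * ln (INR k) ^ 2 / INR k <= INR M / INR n ->
  INR r <= 10 * kappa k * INR n ->
  INR n + INR k.+1 * (INR n / INR k + INR r * ln (INR k)) -
    3 / 20 * (INR k.+1 * INR M / 2 ^ k) <= - INR n.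
Proof.
move=> k_large n_pos dense r_le; have [ln_ge1 _] := ln_large k_large.
have k_pos : 0 < INR k by apply/lt_0_INR/ltP; apply: leq_trans k_large.
have two_k_pos : 0 < 2 ^ k by apply: pow_lt; lra.
rewrite S_INR; set L := ln (INR k) in dense ln_ge1 *; set W := (INR k + 1) * INR n / INR k.
have dense_W : 195 * L ^ 2 * W <= (INR k + 1) * INR M / 2 ^ k.
  have scale : 0 <= INR n * (INR k + 1) / 2 ^ k.
    by apply: Rmult_le_pos; [nra | apply/Rlt_le/Rinv_0_lt_compat].
  have := Rmult_le_compat_r _ _ _ scale dense.
  have e1 : 195 * 2 ^ k * L ^ 2 / INR k * (INR n * (INR k + 1) / 2 ^ k) = 195 * L ^ 2 * W.
    by rewrite /W; field; lra.
  have e2 : INR M / INR n * (INR n * (INR k + 1) / 2 ^ k) = (INR k + 1) * INR M / 2 ^ k.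
    by field; lra.
  lra.
have r_W : (INR k + 1) * (INR r * L) <= 10 * L ^ 2 * W.
  have scale : 0 <= (INR k + 1) * L by nra.
  have := Rmult_le_compat_r _ _ _ scale r_le.
  have e : 10 * kappa k * INR n * ((INR k + 1) * L) = 10 * L ^ 2 * W.
    by rewrite /W /kappa -/L; field; lra.
  lra.
have n_W : INR n <= W.
  have : 0 <= INR n / INR k by apply: Rmult_le_pos; [lra | apply/Rlt_le/Rinv_0_lt_compat].
  by rewrite /W (_ : (INR k + 1) * INR n / INR k = INR n + INR n / INR k); [lra | field; lra].
have L2_ge1 : 1 <= L ^ 2 by nra.
have W_L : W <= L ^ 2 * W by nra.
have -> : (INR k + 1) * (INR n / INR k + INR r * L) = W + (INR k + 1) * (INR r * L).
  by rewrite /W; field; lra.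
lra.
Qed.

Lemma INR_card_kcnf k n M : INR #|{: kcnf k n M}| = (2 ^ k * INR n ^ k) ^ M.
Proof.
rewrite card_ffun card_ord card_ffun card_prod card_bool !card_ord !INR_expn INR_muln INR_2.
by rewrite Rpow_mult_distr Rmult_comm.
Qed.

Lemma card_bad_formulas_le k n M : (400 <= k)%N -> (0 < n)%N ->
  195 * 2 ^ k * ln (INR k) ^ 2 / INR k <= INR M / INR n ->
  INR #|bad_formulas k n M k.+1 (nfloor (10 * kappa k * INR n)) (nfloor (2 * kappa k * INR n))|
    <= exp (- INR n) * INR #|{: kcnf k n M}|.
Proof.
move=> k_large n_gt0 dense.
have [kappa_ge0 kappa_small] := kappa_large k_large.
have k_gt0 : (0 < k)%N by apply: leq_trans k_large.
have k_pos : 0 < INR k by apply/lt_0_INR/ltP.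
have n_pos : 0 < INR n by apply/lt_0_INR/ltP.
set r := nfloor (10 * _ * _); set d := nfloor (2 * _ * _).
have r_le : INR r <= 10 * kappa k * INR n by apply: nfloor_le; nra.
have r_le_n : (r <= n)%N by apply/leP/INR_le; nra.
have overlap : ((k.+1 - 1) * k * (n - d.+1) ^ k <= n ^ k)%N.
  by rewrite subn1; apply: small_overlap.
have counted := INR_leq (card_bad_formulas M r k_gt0 overlap).
have formula := formula_factor_le (leq_divM (k.+1 * M) (10 * 2 ^ k))
  (slot_weight_le n (leq_trans (isT : (2 <= 400)%N) k_large)).
have config := config_factor_le k_gt0 r_le_n.
have expo := exponent_le k_large n_pos dense r_le.
set Y := INR (k ^ ((n - r) * k.+1)) in config *.
have Y_pos : 0 < Y by rewrite /Y INR_expn; apply: pow_lt.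
have two_k_M : INR (2 ^ M * k ^ M) = (2 * INR k) ^ M by rewrite INR_muln !INR_expn Rpow_mult_distr.
apply: (Rmult_le_reg_r (INR (2 ^ M * k ^ M) * Y)).
  by rewrite two_k_M; apply: Rmult_lt_0_compat => //; apply: pow_lt; lra.
set B := #|bad_formulas _ _ _ _ _ _|.
rewrite (_ : INR B * _ = INR (B * (2 ^ M * k ^ M) * k ^ ((n - r) * k.+1)));
  last by rewrite /Y !INR_muln; ring.
apply: Rle_trans counted _; rewrite two_k_M INR_muln.
apply: Rle_trans (Rmult_le_compat _ _ _ _ (pos_INR _) (pos_INR _) formula config) _.
rewrite INR_card_kcnf.
have exps : exp (- (3 / 20) * (INR k.+1 * INR M / 2 ^ k)) *
    exp (INR n + INR k.+1 * (INR n / INR k + INR r * ln (INR k))) <= exp (- INR n).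
  by rewrite -exp_plus; apply: exp_le_exp; lra.
have : 0 <= (2 * INR k) ^ M * (2 ^ k * INR n ^ k) ^ M * Y.
  have nk : 0 <= 2 ^ k * INR n ^ k by apply: Rmult_le_pos; apply: pow_le; lra.
  by apply: Rmult_le_pos; [apply: Rmult_le_pos; apply: pow_le |]; lra.
by move=> nonneg; have := Rmult_le_compat_l _ _ _ nonneg exps; lra.
Qed.

Theorem mainTheorem9 :
  exists k0 : nat, forall k : nat, (k0 <= k)%nat ->
  forall m : nat -> nat,
    (forall n : nat, (0 < n)%nat ->
       (195 * 2 ^ k * (ln (INR k)) ^ 2 / INR k <= INR (m n) / INR n)%R) ->
  forall eps : R, (0 < eps)%R ->
  exists N : nat, forall n : nat, (N <= n)%nat ->
    exists B : {set kcnf k n (m n)},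
      (INR #|B| <= eps * INR #|{: kcnf k n (m n)}|)%R /\
      forall Phi : kcnf k n (m n), Phi \notin B ->
        forall s : seq (assignment n), greedy_mist_run Phi s ->
        forall tau : assignment n,
          (#|[set mu : assignment n | (mu \in s) && inD k tau mu 0 10]| <= k)%nat.
Proof.
exists 400%N => k k_large m dense eps eps_pos.
have [N [N_small /ltP N_gt0]] := archimed_cor1 eps eps_pos.
exists N => n le_Nn; have n_gt0 := leq_trans N_gt0 le_Nn.
have [kappa_ge0 _] := kappa_large k_large.
have band_ge0 c : 0 <= c -> 0 <= c * kappa k * INR n.
  by move=> c_ge0; apply: Rmult_le_pos; [nra | apply: pos_INR].
exists (bad_formulas k n (m n) k.+1 (nfloor (10 * kappa k * INR n)) (nfloor (2 * kappa k * INR n))).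
split=> [|Phi not_bad s run tau].
  apply: Rle_trans (card_bad_formulas_le k_large n_gt0 (dense n n_gt0)) _.
  apply: Rmult_le_compat_r; first exact: pos_INR.
  have N_le : INR N <= exp (INR n).
    by apply: Rle_trans (INR_leq le_Nn) _; have := exp_ineq1_le (INR n); lra.
  rewrite exp_Ropp; apply: Rlt_le; apply: (Rle_lt_trans _ _ _ _ N_small).
  by apply: Rinv_le_contravar N_le; apply/lt_0_INR/ltP.
rewrite leqNgt; apply: contra not_bad; apply: greedy_mist_crowded_bad run _ _ _ tau.
- by move=> a b; apply: notinD0_gt; apply: band_ge0; lra.
- by move=> mu; apply: inT_low_unsat.
- by move=> a b; apply: inD0_le; apply: band_ge0; lra.
Qed.
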